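(* Let $\mathcal{G}_1,\mathcal{G}_2$ be two games with posetal preferences with the same finite set of players $\mathcal{A}$, the same decision sets $\Gamma_i$, and the same metric functions, differing only in the players' preferences; denote by $\mathsf{P}_i^j$ the preference of player $i$ in $\mathcal{G}_j$. If $\mathsf{P}_i^1\precsim_{\mathrm{pre}(\mathbf{M})}\mathsf{P}_i^2$ for all $i\in\mathcal{A}$, then $\mathsf{NE}^{\precsim}(\mathcal{G}_1)\supseteq\mathsf{NE}^{\precsim}(\mathcal{G}_2)$.
   Context: $\mathbf{M}$ is the set of all metric indices. A game with posetal preferences consists of a finite set of players $\mathcal{A}$; compact decision sets $\Gamma_i$, joint space $\Gamma=\prod_i\Gamma_i$, joint actions $\gamma=\langle\gamma_i,\gamma_{-i}\rangle$; for each player $i$ metric functions $m_i^k\colon\Gamma\to\mathbb{R}_{\ge0}$, $k\in\mathbf{M}$ (lower is better), giving an outcome map $m_i\colon\Gamma\to O_i=\prod_{k}\mathbb{R}_{\ge0}$; and a preference $\mathsf{P}_i=\langle\mathcal{M}_i,\preceq\rangle$, a partial order on a subset $\mathcal{M}_i\subseteq\mathbf{M}$ ($k\preceq l$ means $l$ has priority at least that of $k$). A preference $\mathsf{P}=\langle\mathcal{M},\preceq\rangle$ induces a preorder on outcomes: $o\precsim o'$ iff for every $k\in\mathcal{M}$ with $o^k>o'^k$ there is $l\in\mathcal{M}$ with $k\prec l$ and $o^l<o'^l$ (metrics outside $\mathcal{M}$ are ignored); strict part $o\prec o'$ iff $o\precsim o'$ and not $o'\precsim o$. For preferences $\mathsf{P},\mathsf{P}'$,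 $\mathsf{P}\precsim_{\mathrm{pre}(\mathbf{M})}\mathsf{P}'$ iff the strict relation induced by $\mathsf{P}$ on outcomes is contained in the strict relation induced by $\mathsf{P}'$. The weak best response of player $i$ is $\mathsf{BR}^{\precsim}_i(\gamma_{-i})=\{\gamma_i\in\Gamma_i:\text{ no }\gamma_i'\in\Gamma_i\text{ satisfies } m_i(\langle\gamma_i',\gamma_{-i}\rangle)\prec m_i(\langle\gamma_i,\gamma_{-i}\rangle)\}$, with $\prec$ the strict order induced by player $i$'s preference. The set of weak Nash equilibria is $\mathsf{NE}^{\precsim}(\mathcal{G})=\{\gamma\in\Gamma:\gamma_i\in\mathsf{BR}^{\precsim}_i(\gamma_{-i})\ \forall i\in\mathcal{A}\}$. *)

From HB Require Import structures.
From mathcomp Require Import all_boot all_order all_algebra.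
From mathcomp Require Import all_classical all_reals topology.
Set Implicit Arguments. Unset Strict Implicit. Unset Printing Implicit Defensive.
Import Order.TTheory GRing.Theory Num.Theory.
Local Open Scope ring_scope.

(* A preference P = <M_P, ⪯> : a subset of metric indices with a relation
   on it, required (see [is_pref]) to be a partial order on that subset.
   [prel k l] means "l has priority at least that of k". *)
Record pref (M : Type) := Pref {
  pdom : set M;
  prel : M -> M -> Prop }.

Definition is_pref (M : Type) (P : pref M) : Prop :=
  [/\ (forall k, pdom P k -> prel P k k),
      (forall k l, pdom P k -> pdom P l -> prel P k l -> prel P l k -> k = l),
      (forall k l n, pdom P k -> pdom P l -> pdom P n ->
                     prel P k l -> prel P l n -> prel P k n)
    & (forall k l, prel P k l -> pdom P k /\ pdom P l)].

Definition pstrict (M : Type) (P : pref M) (k l : M) : Prop :=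
  prel P k l /\ k <> l.

(* outcomes: o : M -> R, lower is better; an outcome lives in prod_k R_{>=0} *)
Definition outcome (R : realType) (M : Type) (o : M -> R) : Prop :=
  forall k, 0 <= o k.

Definition out_le (R : realType) (M : Type) (P : pref M) (o o' : M -> R) : Prop :=
  forall k, pdom P k -> o' k < o k ->
    exists l, [/\ pdom P l, pstrict P k l & o l < o' l].

Definition out_lt (R : realType) (M : Type) (P : pref M) (o o' : M -> R) : Prop :=
  out_le P o o' /\ ~ out_le P o' o.

Definition pref_pre_le (R : realType) (M : Type) (P P' : pref M) : Prop :=
  forall o o' : M -> R, outcome o -> outcome o' ->
    out_lt P o o' -> out_lt P' o o'.

(* Weak best response of player i against gamma_{-i} (given as the joint
   action gamma, whose i-th component is ignored), for metric functions
   m i k : joint action -> R and player preferences P. *)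
Definition weak_BR (R : realType) (M : Type) (A : finType) (G : A -> Type)
    (m : forall i : A, M -> (forall j, G j) -> R) (P : A -> pref M)
    (i : A) (gamma : forall j, G j) (gi : G i) : Prop :=
  ~ exists gi' : G i,
      out_lt (P i) (fun k => m i k (@dfwith A G gamma i gi'))
                   (fun k => m i k (@dfwith A G gamma i gi)).

Definition weak_NE (R : realType) (M : Type) (A : finType) (G : A -> Type)
    (m : forall i : A, M -> (forall j, G j) -> R) (P : A -> pref M)
    (gamma : forall j, G j) : Prop :=
  forall i : A, @weak_BR R M A G m P i gamma (gamma i).

From HB Require Import structures.
From mathcomp Require Import all_boot all_order all_algebra.
From mathcomp Require Import all_classical all_reals topology.
Local Open Scope ring_scope.
Local Open Scope classical_set_scope.

Section WeakEquilibriaAntitone.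

Variables (R : realType) (M : Type) (A : finType) (G : A -> Type).
Variable m : forall i : A, M -> (forall j, G j) -> R.
Hypothesis m_nonneg : forall i k gamma, 0 <= m i k gamma.
Variables P1 P2 : A -> pref M.

Lemma weak_BR_antitone (i : A) (gamma : forall j, G j) (gi : G i) :
  pref_pre_le R (P1 i) (P2 i) ->
  weak_BR m P2 gamma gi -> weak_BR m P1 gamma gi.
Proof.
move=> hpre hBR [gi' lt1]; apply: hBR; exists gi'.
(* [pref_pre_le] only compares outcomes in the nonnegative orthant. *)
by apply: hpre => // k; apply: m_nonneg.
Qed.

Lemma weak_NE_antitone (gamma : forall j, G j) :
  (forall i, pref_pre_le R (P1 i) (P2 i)) ->
  weak_NE m P2 gamma -> weak_NE m P1 gamma.
Proof. by move=> hpre hNE i; apply: weak_BR_antitone. Qed.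

End WeakEquilibriaAntitone.

Theorem theorem2 (R : realType) (M : Type) (A : finType)
    (G : A -> topologicalType)
    (Gcompact : forall i, compact [set: G i])
    (m : forall i : A, M -> (forall j, G j) -> R)
    (m_nonneg : forall i k gamma, 0 <= m i k gamma)
    (P1 P2 : A -> pref M)
    (P1_pref : forall i, is_pref (P1 i))
    (P2_pref : forall i, is_pref (P2 i))
    (hpre : forall i, pref_pre_le R (P1 i) (P2 i)) :
  forall gamma : forall j, G j, weak_NE m P2 gamma -> weak_NE m P1 gamma.
Proof.
by move=> gamma; apply: weak_NE_antitone.
Qed.
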